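(* Let $H$ and $G$ be locally compact, Hausdorff, étale groupoids, let $c : H \to \mathbb{Z}$ be a continuous cocycle, and let $\alpha : G \to G$ be an automorphism. Then the groupoid $H \times_{c,\alpha} G$, endowed with the product topology, is locally compact, Hausdorff and étale. If $G$ and $H$ are second countable, so is $H\times_{c,\alpha}G$. If $G$ and $H$ are ample, so is $H \times_{c,\alpha} G$.
   Context: A cocycle satisfies $c(gh) = c(g)+c(h)$ whenever $s(g) = r(h)$. An automorphism of a topological groupoid is a homeomorphism preserving the groupoid structure. $H \times_{c,\alpha} G$ is the set $H \times G$ with unit space $H^{(0)}\times G^{(0)}$, $r(h,g) = (r(h),r(g))$, $s(h,g) = (s(h), \alpha^{c(h)}(s(g)))$, product $(h_1,g_1)(h_2,g_2) = (h_1h_2, g_1\alpha^{-c(h_1)}(g_2))$ when $s(h_1,g_1) = r(h_2,g_2)$, and inverse $(h,g)^{-1} = (h^{-1},\alpha^{c(h)}(g^{-1}))$. A groupoid is étale if its range map is a local homeomorphism, and ample if it has a basis of compact open bisections. *)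

From HB Require Import structures.
From mathcomp Require Import all_boot all_order all_algebra.
From mathcomp Require Import all_classical all_reals topology.
Set Implicit Arguments. Unset Strict Implicit. Unset Printing Implicit Defensive.
Import Order.TTheory GRing.Theory Num.Theory.
Local Open Scope classical_set_scope.

(* A groupoid structure on the carrier T (the arrows), given by a total
   multiplication (only meaningful on composable pairs, s g = r h),
   an inverse, and range/source maps; the unit space is range r. *)
Definition is_groupoid (T : Type) (mul : T -> T -> T) (inv : T -> T)
    (r s : T -> T) : Prop :=
  ((forall g, r (r g) = r g /\ s (r g) = r g /\ r (s g) = s g /\ s (s g) = s g) /\
      (forall g h, s g = r h -> r (mul g h) = r g /\ s (mul g h) = s h) /\
      (forall g h k, s g = r h -> s h = r k ->
         mul (mul g h) k = mul g (mul h k)) /\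
      (forall g, mul (r g) g = g /\ mul g (s g) = g) /\
      (forall g, r (inv g) = s g /\ s (inv g) = r g) /\
      (forall g, mul (inv g) g = s g /\ mul g (inv g) = r g)).

Definition units (T : Type) (r : T -> T) : set T := range r.

Definition is_top_groupoid (T : topologicalType) (mul : T -> T -> T)
    (inv : T -> T) (r s : T -> T) : Prop :=
  [/\ is_groupoid mul inv r s,
      {within [set p : T * T | s p.1 = r p.2],
         continuous (fun p : T * T => mul p.1 p.2)},
      continuous inv, continuous r & continuous s].

Definition local_homeo_onto (T : topologicalType) (f : T -> T) (Y : set T) :=
  continuous f /\ f @` setT `<=` Y /\
  forall x, exists U : set T, [/\ open U, U x,
    (forall a b, U a -> U b -> f a = f b -> a = b) &
    (forall W, open W -> W `<=` U -> exists V, open V /\ f @` W = V `&` Y)].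

Definition etale (T : topologicalType) (r : T -> T) :=
  local_homeo_onto r (units r).

Definition bisection (T : Type) (r s : T -> T) (B : set T) :=
  (forall a b, B a -> B b -> r a = r b -> a = b) /\
  (forall a b, B a -> B b -> s a = s b -> a = b).

Definition ample (T : topologicalType) (r s : T -> T) :=
  basis [set B : set T | compact B /\ open B /\ bisection r s B].

Definition cocycle (T : Type) (mul : T -> T -> T) (r s : T -> T) (c : T -> int) :=
  forall g h, s g = r h -> c (mul g h) = (c g + c h)%R.

(* continuity into Z with its (discrete) topology *)
Definition continuous_Z (T : topologicalType) (c : T -> int) :=
  forall n : int, open (c @^-1` [set n]).

Definition groupoid_automorphism (T : topologicalType) (mul : T -> T -> T)
    (inv : T -> T) (r s : T -> T) (alpha beta : T -> T) :=
  [/\ cancel alpha beta, cancel beta alpha, continuous alpha, continuous beta &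
     [/\ (forall g h, s g = r h -> alpha (mul g h) = mul (alpha g) (alpha h)),
      (forall g, alpha (inv g) = inv (alpha g)) &
      (forall g, alpha (r g) = r (alpha g) /\ alpha (s g) = s (alpha g))]].

(* integer powers alpha^n, with beta the inverse of alpha *)
Definition zpow (T : Type) (alpha beta : T -> T) (n : int) : T -> T :=
  match n with
  | Posz k => iter k alpha
  | Negz k => iter k.+1 beta
  end.

Section Skew.
Variables (H G : Type) (mulH : H -> H -> H) (invH rH sH : H -> H)
  (mulG : G -> G -> G) (invG rG sG : G -> G) (c : H -> int) (alpha beta : G -> G).

Definition skew_r (x : H * G) : H * G := (rH x.1, rG x.2).
Definition skew_s (x : H * G) : H * G :=
  (sH x.1, zpow alpha beta (c x.1) (sG x.2)).
Definition skew_mul (x y : H * G) : H * G :=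
  (mulH x.1 y.1, mulG x.2 (zpow alpha beta (- c x.1)%R y.2)).
Definition skew_inv (x : H * G) : H * G :=
  (invH x.1, zpow alpha beta (c x.1) (invG x.2)).
End Skew.

From HB Require Import structures.
From mathcomp Require Import all_boot all_order all_algebra.
From mathcomp Require Import all_classical all_reals topology.
From mathcomp Require Import zify.

(* The topological properties are those of a product space, and the range map
   of the skew product is the product of the two range maps.  What remains is
   continuity of the twisted operations: since c is locally constant, near any
   arrow (h, g) the maps s, inverse and multiplication of H x_{c,alpha} G
   coincide with product maps twisted by the fixed homeomorphism alpha^(c h),
   and alpha^(c h) is a groupoid automorphism of G. *)

Set Implicit Arguments.
Unset Strict Implicit.
Unset Printing Implicit Defensive.

Import GRing.Theory Num.Theory.
Local Open Scope classical_set_scope.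

Lemma continuous_locally (X Y : topologicalType) (f : X -> Y) :
  (forall x : X, exists2 N : set X, nbhs x N &
     exists2 g : X -> Y, continuous g & forall y, N y -> f y = g y) ->
  continuous f.
Proof.
move=> loc x W; have [N nN [g cg fg]] := loc x.
rewrite fg; last exact: nbhs_singleton.
move=> /cg ngW; apply: filterS (filterI nN ngW) => y [Ny gy] /=.
by rewrite fg.
Qed.

Lemma open_subspace_local (T : topologicalType) (Y A : set T) : A `<=` Y ->
  (forall y, A y -> exists O, [/\ open O, O y & O `&` Y `<=` A]) ->
  exists V, open V /\ A = V `&` Y.
Proof.
move=> AY loc; exists [set y | exists O, [/\ open O, O y & O `&` Y `<=` A]].
split.
  rewrite {1}openE => y [O [oO Oy OA]]; rewrite /interior.
  apply: (@filterS _ _ _ O); first by move=> z Oz; exists O.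
  by apply: open_nbhs_nbhs.
apply/seteqP; split => [y Ay|y [[O [_ Oy OA]] Yy]]; last exact: OA.
by split; [exact: loc | exact: AY].
Qed.

Lemma within_continuousP (X Y : topologicalType) (A : set X) (f : X -> Y) :
  {within A, continuous f} <->
  forall x, A x -> forall W, nbhs (f x) W -> nbhs x (fun y => A y -> W (f y)).
Proof. by rewrite subspace_continuousP. Qed.

Section ProductTopology.
Context {T U : topologicalType}.

Lemma nbhs_prodE (p : T * U) (A : set (T * U)) :
  nbhs p A <-> exists P Q, [/\ nbhs p.1 P, nbhs p.2 Q &
     forall a b, P a -> Q b -> A (a, b)].
Proof.
split.
  case=> -[P Q] /= [nP nQ] sPQ; exists P, Q.
  by split => // a b Pa Qb; apply: (sPQ (a, b)).
by case=> P [Q [nP nQ sPQ]]; exists (P, Q) => // -[a b] [/= Pa Qb]; apply: sPQ.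
Qed.

Lemma nbhs_setX (a : T) (b : U) (P : set T) (Q : set U) :
  nbhs a P -> nbhs b Q -> nbhs (a, b) (P `*` Q).
Proof. by move=> nP nQ; apply/nbhs_prodE; exists P, Q. Qed.

Lemma open_setX (A : set T) (B : set U) : open A -> open B -> open (A `*` B).
Proof.
rewrite !openE => oA oB [a b] [/= Aa Bb].
by apply: nbhs_setX; [exact: oA | exact: oB].
Qed.

Lemma closed_setX (A : set T) (B : set U) :
  closed A -> closed B -> closed (A `*` B).
Proof.
move=> cA cB; have -> : A `*` B = ~` (~` A `*` setT `|` setT `*` ~` B).
  apply/seteqP; split; first by move=> [a b] [/= Aa Bb] [[/= ?]|[_ /=]].
  by move=> [a b] /= nAB; split; apply: contrapT => N; apply: nAB; [left|right].
apply/open_closedC/openU; apply: open_setX;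
  by [exact: openT | exact: closed_openC].
Qed.

Lemma hausdorff_prod : hausdorff_space T -> hausdorff_space U ->
  hausdorff_space (T * U)%type.
Proof.
move=> hT hU [p1 p2] [q1 q2] pq; congr pair.
- apply: hT => A B nA nB; have [[a b] [[Aa _] [Ba _]]] :=
    pq _ _ (nbhs_setX nA filterT) (nbhs_setX nB filterT).
  by exists a.
- apply: hU => A B nA nB; have [[a b] [[_ Ab] [_ Bb]]] :=
    pq _ _ (nbhs_setX filterT nA) (nbhs_setX filterT nB).
  by exists b.
Qed.

Lemma locally_compact_prod : locally_compact [set: T] -> locally_compact [set: U] ->
  locally_compact [set: (T * U)%type].
Proof.
move=> lT lU [x1 x2] _.
have [A + [cA clA]] := lT x1 I; have [B + [cB clB]] := lU x2 I.
rewrite !withinET => nA nB.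
exists (A `*` B); first exact: nbhs_setX.
by split; [exact: compact_setX | exact: closed_setX].
Qed.

Lemma basis_setX (B1 : set (set T)) (B2 : set (set U)) (B : set (set (T * U))) :
  basis B1 -> basis B2 -> B `<=` open ->
  (forall U1 U2, B1 U1 -> B2 U2 -> B (U1 `*` U2)) -> basis B.
Proof.
move=> [_ b1] [_ b2] oB BX; split => // x W /nbhs_prodE [P [Q [nP nQ sPQ]]].
have [U1 [BU1 U1x] U1P] := b1 _ _ nP; have [U2 [BU2 U2x] U2Q] := b2 _ _ nQ.
exists (U1 `*` U2); first by split; [exact: BX|].
by move=> [a b] [/= ? ?]; apply: sPQ; [exact: U1P | exact: U2Q].
Qed.

Lemma second_countable_prod : second_countable (T := T) -> second_countable (T := U) ->
  second_countable (T := (T * U)%type).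
Proof.
move=> [B1 cB1 b1] [B2 cB2 b2]; exists ((fun p => p.1 `*` p.2) @` (B1 `*` B2)).
  exact: card_le_trans (card_image_le _ _) (countableX cB1 cB2).
apply: (basis_setX b1 b2); last by move=> U1 U2 BU1 BU2; exists (U1, U2).
by move=> _ [[U1 U2] [/= /(proj1 b1) oU1 /(proj1 b2) oU2] <-]; apply: open_setX.
Qed.
End ProductTopology.

Lemma continuous_prod_map (T U T' U' : topologicalType) (f : T -> T') (g : U -> U') :
  continuous f -> continuous g -> continuous (fun p : T * U => (f p.1, g p.2)).
Proof.
move=> cf cg [a b] W /nbhs_prodE [P [Q [nP nQ sPQ]]].
apply/nbhs_prodE; exists (f @^-1` P), (g @^-1` Q).
by split => [||x y /sPQ]; [exact: cf | exact: cg | apply].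
Qed.

Section Zpow.
Variables (G : Type) (alpha beta : G -> G).
Local Notation Z := (zpow alpha beta).

Lemma zpow_ind (P : (G -> G) -> Prop) : P id -> P alpha -> P beta ->
  (forall f g, P f -> P g -> P (f \o g)) -> forall n, P (Z n).
Proof.
move=> Pid Pa Pb Pc n; have Piter f k : P f -> P (iter k f).
  by move=> Pf; elim: k => [|k IH] //; apply: Pc.
by case: n => k /=; apply: Piter.
Qed.

Hypotheses (alphaK : cancel alpha beta) (betaK : cancel beta alpha).

Lemma zpowS (n : int) x : Z (n + 1)%R x = alpha (Z n x).
Proof.
case: n => [k|[|k]].
- by have -> : (Posz k + 1 = Posz k.+1)%R by lia.
- by rewrite /= betaK.
- have -> : (Negz k.+1 + 1 = Negz k)%R by lia.
  by rewrite /= betaK.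
Qed.

Lemma zpowB1 (n : int) x : Z (n - 1)%R x = beta (Z n x).
Proof. by rewrite -[in RHS](subrK 1%R n) zpowS alphaK. Qed.

Lemma zpowD (m n : int) x : Z (m + n)%R x = Z m (Z n x).
Proof.
case: m => k; elim: k => [|k IH].
- by rewrite add0r.
- have -> : (Posz k.+1 + n = Posz k + n + 1)%R by lia.
  by rewrite zpowS IH.
- have -> : (Negz 0 + n = n - 1)%R by lia.
  by rewrite zpowB1.
- have -> : (Negz k.+1 + n = Negz k + n - 1)%R by lia.
  by rewrite zpowB1 IH.
Qed.

Lemma zpowK (n : int) : cancel (Z n) (Z (- n)%R).
Proof. by move=> x; rewrite -zpowD addNr. Qed.
End Zpow.

Section GroupoidMorphism.
Variables (G : Type) (mulG : G -> G -> G) (invG rG sG : G -> G).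

Definition groupoid_morphism (f : G -> G) :=
  [/\ forall g h, sG g = rG h -> f (mulG g h) = mulG (f g) (f h),
      forall g, f (invG g) = invG (f g) &
      forall g, f (rG g) = rG (f g) /\ f (sG g) = sG (f g)].

Lemma groupoid_morphism_comp f g : groupoid_morphism f -> groupoid_morphism g ->
  groupoid_morphism (f \o g).
Proof.
move=> [fM fV fRS] [gM gV gRS]; split => [x y xy|x|x] /=.
- by rewrite gM // fM // -(proj2 (gRS x)) -(proj1 (gRS y)) xy.
- by rewrite gV fV.
- by rewrite (proj1 (gRS x)) (proj2 (gRS x)) (proj1 (fRS _)) (proj2 (fRS _)).
Qed.

Lemma groupoid_morphism_can f g : cancel f g -> cancel g f ->
  groupoid_morphism f -> groupoid_morphism g.
Proof.
move=> fK gK [fM fV fRS].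
have gRS x : g (rG x) = rG (g x) /\ g (sG x) = sG (g x).
  by split; apply: (can_inj fK); rewrite ?(proj1 (fRS _)) ?(proj2 (fRS _)) !gK.
split => // [x y xy|x]; apply: (can_inj fK).
- rewrite fM ?gK // -(proj2 (gRS _)) -(proj1 (gRS _)).
  by rewrite xy.
- by rewrite fV !gK.
Qed.

Lemma groupoid_morphism_zpow alpha beta n : cancel alpha beta -> cancel beta alpha ->
  groupoid_morphism alpha -> groupoid_morphism (zpow alpha beta n).
Proof.
move=> alphaK betaK aM; apply: zpow_ind => //.
- exact: groupoid_morphism_can alphaK betaK aM.
- exact: groupoid_morphism_comp.
Qed.
End GroupoidMorphism.

Section Cocycle.
Variables (H : Type) (mulH : H -> H -> H) (invH rH sH : H -> H) (c : H -> int).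
Hypotheses (hH : is_groupoid mulH invH rH sH) (cc : cocycle mulH rH sH c).

Lemma cocycle_r h : c (rH h) = 0%R.
Proof.
have [[rr [sr _]] [_ [_ [unit _]]]] := (hH.1 h, hH.2).
have idem : mulH (rH h) (rH h) = rH h by rewrite -{1}rr; exact: (unit _).1.
have := @cc (rH h) (rH h); rewrite sr rr idem => /(_ erefl).
lia.
Qed.

Lemma cocycle_s h : c (sH h) = 0%R.
Proof. by rewrite -(proj1 (proj2 (proj2 (hH.1 h)))) cocycle_r. Qed.

Lemma cocycle_inv h : c (invH h) = (- c h)%R.
Proof.
have [_ [_ [_ [_ [rsV mulV]]]]] := hH.
have := cc (proj2 (rsV h)); rewrite (proj1 (mulV h)) cocycle_s.
lia.
Qed.
End Cocycle.

Section SkewGroupoid.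
Variables (H G : Type) (mulH : H -> H -> H) (invH rH sH : H -> H)
  (mulG : G -> G -> G) (invG rG sG : G -> G) (c : H -> int) (alpha beta : G -> G).
Hypotheses (hH : is_groupoid mulH invH rH sH) (hG : is_groupoid mulG invG rG sG)
  (cc : cocycle mulH rH sH c)
  (alphaK : cancel alpha beta) (betaK : cancel beta alpha)
  (alphaM : groupoid_morphism mulG invG rG sG alpha).
Local Notation Z := (zpow alpha beta).

Let zpowD := zpowD alphaK betaK.
Let zpowK := zpowK alphaK betaK.
Let zpowM n : groupoid_morphism mulG invG rG sG (Z n) :=
  groupoid_morphism_zpow n alphaK betaK alphaM.

Let zpow_mul n g h : sG g = rG h -> Z n (mulG g h) = mulG (Z n g) (Z n h).
Proof. by case: (zpowM n) => + _ _; apply. Qed.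

Let zpow_r n g : Z n (rG g) = rG (Z n g).
Proof. by case: (zpowM n) => _ _ /(_ g) []. Qed.

Let zpow_s n g : Z n (sG g) = sG (Z n g).
Proof. by case: (zpowM n) => _ _ /(_ g) []. Qed.

Lemma zpow_composable n g h : Z n (sG g) = rG h -> sG g = rG (Z (- n)%R h).
Proof. by move=> gh; rewrite -zpow_r -gh zpowK. Qed.

Lemma skew_groupoid : is_groupoid (skew_mul mulH mulG c alpha beta)
  (skew_inv invH invG c alpha beta) (skew_r rH rG) (skew_s sH sG c alpha beta).
Proof.
have [unitH [rsMH [assocH [unitMH [rsVH mulVH]]]]] := hH.
have [unitG [rsMG [assocG [unitMG [rsVG mulVG]]]]] := hG.
have c_r := cocycle_r hH cc; have c_s := cocycle_s hH cc.
have c_inv := cocycle_inv hH cc.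
rewrite /is_groupoid /skew_mul /skew_inv /skew_r /skew_s /=.
split; [|split; [|split; [|split; [|split]]]].
- move=> [h g] /=.
  have [rrh [srh [rsh ssh]]] := unitH h; have [rrg [srg [rsg ssg]]] := unitG g.
  by rewrite c_r c_s rrh rrg srh srg rsh -zpow_r rsg ssh -zpow_s ssg.
- move=> [h1 g1] [h2 g2] /= [e1 /zpow_composable e2].
  have [-> ->] := rsMH _ _ e1; have [-> ->] := rsMG _ _ e2.
  rewrite cc // -zpow_s -zpowD.
  by have -> : (c h1 + c h2 + - c h1 = c h2)%R by lia.
- move=> [h1 g1] [h2 g2] [h3 g3] /= [e1 /zpow_composable e2] [e1' /zpow_composable e2'].
  rewrite assocH // cc // zpow_mul // -zpowD.
  have -> : (- c h1 + - c h2 = - (c h1 + c h2))%R by lia.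
  rewrite assocG // -zpow_s e2' zpow_r -zpowD.
  by congr (rG (Z _ g3)); lia.
- move=> [h g] /=; have [-> ->] := unitMH h.
  by rewrite c_r zpowK; have [-> ->] := unitMG g.
- move=> [h g] /=; have [-> ->] := rsVH h.
  by rewrite c_inv -zpow_s -zpow_r zpowK; have [-> ->] := rsVG g.
- move=> [h g] /=; have [-> ->] := mulVH h.
  rewrite c_inv opprK -zpow_mul ?zpowK //; last by have [_ ->] := rsVG g.
  by have [-> ->] := mulVG g; rewrite zpow_s.
Qed.
End SkewGroupoid.

Lemma nbhs_level (T : topologicalType) (c : T -> int) (x : T) :
  continuous_Z c -> nbhs x (c @^-1` [set c x]).
Proof. by move=> cZ; apply: open_nbhs_nbhs; split => //; apply: cZ. Qed.

Lemma continuous_zpow (G : topologicalType) (alpha beta : G -> G) (n : int) :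
  continuous alpha -> continuous beta -> continuous (zpow alpha beta n).
Proof.
move=> ca cb; apply: (@zpow_ind _ _ _ (fun f : G -> G => continuous f)) => //.
  by move=> x; apply: cvg_id.
by move=> f g cf cg x; apply: continuous_comp; [exact: cg | exact: cf].
Qed.

Section SkewTopology.
Variables (H G : topologicalType) (c : H -> int) (alpha beta : G -> G).
Hypotheses (cZ : continuous_Z c) (alpha_cont : continuous alpha)
  (beta_cont : continuous beta).
Local Notation Z := (zpow alpha beta).

Let Z_cont n : continuous (Z n) := continuous_zpow (n := n) alpha_cont beta_cont.

Lemma continuous_twist (f : H -> H) (g : G -> G) : continuous f -> continuous g ->
  continuous (fun p : H * G => (f p.1, Z (c p.1) (g p.2))).
Proof.
move=> cf cg; apply: continuous_locally => -[h x].
exists (c @^-1` [set c h] `*` setT); first exact: nbhs_setX (nbhs_level h cZ) filterT.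
exists (fun p : H * G => (f p.1, (Z (c h) \o g) p.2)).
  apply: continuous_prod_map => // y.
  by apply: continuous_comp; [exact: cg | exact: Z_cont].
by move=> [a b] [/= -> _].
Qed.
End SkewTopology.

Section SkewMul.
Variables (H G : topologicalType) (mulH : H -> H -> H) (rH sH : H -> H)
  (mulG : G -> G -> G) (invG rG sG : G -> G) (c : H -> int) (alpha beta : G -> G).
Hypotheses (cZ : continuous_Z c)
  (mulH_cont : {within [set p : H * H | sH p.1 = rH p.2],
     continuous (fun p : H * H => mulH p.1 p.2)})
  (mulG_cont : {within [set p : G * G | sG p.1 = rG p.2],
     continuous (fun p : G * G => mulG p.1 p.2)})
  (alphaK : cancel alpha beta) (betaK : cancel beta alpha)
  (alphaM : groupoid_morphism mulG invG rG sG alpha)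
  (alpha_cont : continuous alpha) (beta_cont : continuous beta).
Local Notation Z := (zpow alpha beta).

Lemma continuous_skew_mul :
  {within [set p : (H * G) * (H * G) | skew_s sH sG c alpha beta p.1 = skew_r rH rG p.2],
    continuous (fun p => skew_mul mulH mulG c alpha beta p.1 p.2)}.
Proof.
have composable := zpow_composable alphaK betaK alphaM.
apply/within_continuousP => -[[h1 g1] [h2 g2]] /= [e1 e2] W.
move=> /nbhs_prodE [P [Q [/= nP nQ PQW]]].
have /nbhs_prodE [A1 [A2 [/= nA1 nA2 mulA]]] :=
  (within_continuousP _ _).1 mulH_cont (h1, h2) e1 _ nP.
have /nbhs_prodE [B1 [B2 [/= nB1 nB2 mulB]]] :=
  (within_continuousP _ _).1 mulG_cont (g1, Z (- c h1)%R g2) (composable _ _ _ e2) _ nQ.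
apply/nbhs_prodE; exists ((A1 `&` c @^-1` [set c h1]) `*` B1),
  (A2 `*` Z (- c h1)%R @^-1` B2); split.
- by apply: nbhs_setX => //; apply: filterI nA1 (nbhs_level h1 cZ).
- apply: nbhs_setX => //.
  exact: (continuous_zpow (n := (- c h1)%R) alpha_cont beta_cont).
move=> [a1 a2] [b1 b2] [[/= A1a ca] B1a] [/= A2b B2b] [/= ab1 ab2].
rewrite /skew_mul /=; apply: PQW; first exact: mulA.
by rewrite ca; apply: mulB => //; apply: composable; rewrite -ca.
Qed.
End SkewMul.

Lemma skew_top_groupoid (H G : topologicalType)
  (mulH : H -> H -> H) (invH rH sH : H -> H)
  (mulG : G -> G -> G) (invG rG sG : G -> G) (c : H -> int) (alpha beta : G -> G) :
  is_top_groupoid mulH invH rH sH -> is_top_groupoid mulG invG rG sG ->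
  cocycle mulH rH sH c -> continuous_Z c ->
  groupoid_automorphism mulG invG rG sG alpha beta ->
  is_top_groupoid (skew_mul mulH mulG c alpha beta) (skew_inv invH invG c alpha beta)
    (skew_r rH rG) (skew_s sH sG c alpha beta).
Proof.
move=> [gH mulH_cont invH_cont rH_cont sH_cont] [gG mulG_cont invG_cont rG_cont sG_cont].
move=> cc cZ [alphaK betaK alpha_cont beta_cont alphaM]; split.
- exact: skew_groupoid.
- exact: (continuous_skew_mul cZ mulH_cont mulG_cont alphaK betaK alphaM
    alpha_cont beta_cont).
- exact: continuous_twist.
- exact: continuous_prod_map.
- exact: continuous_twist.
Qed.

Lemma local_homeo_onto_prod (T U : topologicalType) (f : T -> T) (g : U -> U)
    (Y1 : set T) (Y2 : set U) :
  local_homeo_onto f Y1 -> local_homeo_onto g Y2 ->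
  local_homeo_onto (fun p : T * U => (f p.1, g p.2)) (Y1 `*` Y2).
Proof.
move=> [f_cont [fY1 f_loc]] [g_cont [gY2 g_loc]].
have fgY : (fun p : T * U => (f p.1, g p.2)) @` setT `<=` Y1 `*` Y2.
  by move=> _ [[a b] _ <-]; split; [apply: fY1; exists a | apply: gY2; exists b].
rewrite /local_homeo_onto; split; first exact: continuous_prod_map.
split; first exact: fgY.
move=> [x1 x2]; have [U1 [oU1 U1x f_inj f_open]] := f_loc x1.
have [U2 [oU2 U2x g_inj g_open]] := g_loc x2.
exists (U1 `*` U2); split; [exact: open_setX | by [] | |].
  move=> [a1 a2] [b1 b2] [/= U1a U2a] [/= U1b U2b] [fab gab].
  by congr pair; [exact: f_inj fab | exact: g_inj gab].
move=> W oW WU; apply: open_subspace_local => [_ [w _ <-]|].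
  by apply: fgY; exists w.
move=> _ [w Ww <-]; have [/= U1w U2w] := WU _ Ww.
have /nbhs_prodE [P [Q [+ + PQW]]] : nbhs w W by apply: open_nbhs_nbhs.
rewrite !nbhsE => -[A [oA Aw] AP] [B [oB Bw] BQ].
have [V1 [oV1 fA]] := f_open (A `&` U1) (openI oA oU1) (@subIsetr _ _ _).
have [V2 [oV2 gB]] := g_open (B `&` U2) (openI oB oU2) (@subIsetr _ _ _).
exists (V1 `*` V2); split; first exact: open_setX.
  have : (f @` (A `&` U1)) (f w.1) by exists w.1.
  have : (g @` (B `&` U2)) (g w.2) by exists w.2.
  by rewrite fA gB => -[? _] [? _].
move=> [y1 y2] [[/= V1y V2y] [/= Y1y Y2y]].
have [a [Aa _] <-] : (f @` (A `&` U1)) y1 by rewrite fA.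
have [b [Bb _] <-] : (g @` (B `&` U2)) y2 by rewrite gB.
by exists (a, b) => //; apply: PQW; [apply: AP | apply: BQ].
Qed.

Lemma units_skew_r (H G : Type) (rH : H -> H) (rG : G -> G) :
  units (skew_r rH rG) = units rH `*` units rG.
Proof.
apply/seteqP; split => [_ [[h g] _ <-]|[x y] [/= [h _ <-] [g _ <-]]].
- by split; [exists h | exists g].
- by exists (h, g).
Qed.

Lemma etale_skew_r (H G : topologicalType) (rH : H -> H) (rG : G -> G) :
  etale rH -> etale rG -> etale (skew_r rH rG).
Proof. by rewrite /etale units_skew_r; apply: local_homeo_onto_prod. Qed.

Lemma bisection_skew (H G : Type) (rH sH : H -> H) (rG sG : G -> G)
    (c : H -> int) (alpha beta : G -> G) (U1 : set H) (U2 : set G) :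
  cancel alpha beta -> cancel beta alpha ->
  bisection rH sH U1 -> bisection rG sG U2 ->
  bisection (skew_r rH rG) (skew_s sH sG c alpha beta) (U1 `*` U2).
Proof.
move=> alphaK betaK [rH_inj sH_inj] [rG_inj sG_inj].
split => -[a1 a2] [b1 b2] [/= U1a U2a] [/= U1b U2b] [e1 e2].
  by congr pair; [exact: rH_inj e1 | exact: rG_inj e2].
have ab1 := sH_inj _ _ U1a U1b e1; subst b1.
by congr pair; apply: sG_inj => //; exact: (can_inj (zpowK alphaK betaK (c a1)) e2).
Qed.

Lemma ample_skew (H G : topologicalType) (rH sH : H -> H) (rG sG : G -> G)
    (c : H -> int) (alpha beta : G -> G) :
  cancel alpha beta -> cancel beta alpha -> ample rH sH -> ample rG sG ->
  ample (skew_r rH rG) (skew_s sH sG c alpha beta).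
Proof.
move=> alphaK betaK bH bG; apply: (basis_setX bH bG) => [U [_ []] //|U1 U2].
move=> [U1_cpt [U1_open U1_bis]] [U2_cpt [U2_open U2_bis]].
split; first exact: compact_setX.
by split; [exact: open_setX | exact: bisection_skew].
Qed.

Theorem lemma3p2 (H G : topologicalType)
  (mulH : H -> H -> H) (invH rH sH : H -> H)
  (mulG : G -> G -> G) (invG rG sG : G -> G)
  (c : H -> int) (alpha beta : G -> G) :
  is_top_groupoid mulH invH rH sH -> locally_compact [set: H] ->
  hausdorff_space H -> etale rH ->
  is_top_groupoid mulG invG rG sG -> locally_compact [set: G] ->
  hausdorff_space G -> etale rG ->
  cocycle mulH rH sH c -> continuous_Z c ->
  groupoid_automorphism mulG invG rG sG alpha beta ->
  let mul := skew_mul mulH mulG c alpha beta in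
  let inv := skew_inv invH invG c alpha beta in
  let r := skew_r rH rG in
  let s := skew_s sH sG c alpha beta in
  [/\ is_top_groupoid mul inv r s,
      locally_compact [set: H * G],
      hausdorff_space (H * G)%type,
      etale r &
      ((second_countable (T := H) -> second_countable (T := G) ->
         second_countable (T := (H * G)%type)) /\
      (ample rH sH -> ample rG sG -> ample r s))].
Proof.
move=> tH lH hH eH tG lG hG eG cc cZ aut mul inv r s.
have [alphaK betaK _ _ _] := aut.
split.
- exact: skew_top_groupoid.
- exact: locally_compact_prod.
- exact: hausdorff_prod.
- exact: etale_skew_r.
- by split; [exact: second_countable_prod | exact: ample_skew].
Qed.
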